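(* Let $g$ be a non-negative integer and let $G$ be a connected graph of order $n$ which has a $g$-good-neighbor cut. Then $$0\leq g\leq \min\left\{\Delta(G),\left\lfloor \frac{n-3}{2}\right\rfloor\right\}$$ and $$e(G)\leq {n\choose 2}-(g+1)^2.$$
   Context: For a connected graph $G=(V,E)$ and integer $g\ge0$: a set $F\subseteq V$ is a $g$-good-neighbor faulty set if $|N(v)\cap (V-F)|\geq g$ for every $v\in V-F$; a $g$-good-neighbor cut is such an $F$ with $G-F$ disconnected. $e(G)$ is the number of edges and $\Delta(G)$ the maximum degree. *)

From mathcomp Require Import all_boot.
Set Implicit Arguments. Unset Strict Implicit. Unset Printing Implicit Defensive.

Definition simple_graph (T : finType) (e : rel T) : Prop :=
  symmetric e /\ irreflexive e.

Definition nbhd (T : finType) (e : rel T) (v : T) : {set T} := [set u | e v u].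

Definition connected_graph (T : finType) (e : rel T) : Prop :=
  forall x y : T, connect e x y.

Definition del_rel (T : finType) (e : rel T) (F : {set T}) : rel T :=
  [rel x y | [&& e x y, x \notin F & y \notin F]].

Definition disconnected_after (T : finType) (e : rel T) (F : {set T}) : Prop :=
  exists x y : T, [/\ x \notin F, y \notin F & ~~ connect (del_rel e F) x y].

Definition good_neighbor_faulty (T : finType) (e : rel T) (g : nat) (F : {set T}) : Prop :=
  forall v : T, v \notin F -> g <= #|nbhd e v :&: ~: F|.

Definition good_neighbor_cut (T : finType) (e : rel T) (g : nat) (F : {set T}) : Prop :=
  good_neighbor_faulty e g F /\ disconnected_after e F.

Definition max_degree (T : finType) (e : rel T) : nat := \max_(v : T) #|nbhd e v|.

Definition num_edges (T : finType) (e : rel T) : nat :=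
  #|[set A : {set T} | [exists x, exists y, e x y && (A == [set x; y])]]|.

From mathcomp Require Import all_boot zify.

Set Implicit Arguments.
Unset Strict Implicit.
Unset Printing Implicit Defensive.

(* Let F be a g-good-neighbor cut and x, y vertices lying in different
   components C, D of G - F. Each vertex of C has at least g neighbours
   outside F, all of them in C, so |C| >= g + 1, and likewise |D| >= g + 1.
   As C, D and the nonempty set F are pairwise disjoint, 2(g + 1) + 1 <= n.
   No edge joins C to D, so the |C||D| >= (g + 1)^2 pairs {c, d} with c in C
   and d in D are non-edges, which gives e(G) <= C(n, 2) - (g + 1)^2. *)

Lemma eq_set2 (T : finType) (a b c d : T) :
  [set a; b] = [set c; d] -> a = c /\ b = d \/ a = d /\ b = c.
Proof.
move=> abcd.
have /set2P a_cd : a \in [set c; d] by rewrite -abcd set21.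
have /set2P b_cd : b \in [set c; d] by rewrite -abcd set22.
have /set2P c_ab : c \in [set a; b] by rewrite abcd set21.
have /set2P d_ab : d \in [set a; b] by rewrite abcd set22.
by intuition subst; auto.
Qed.

Section CrossPairs.

Variables (T : finType) (e : rel T).
Hypotheses (e_sym : symmetric e) (e_irr : irreflexive e).

Lemma num_edges_add_cross (A B : {set T}) :
  [disjoint A & B] -> {in A & B, forall a b, ~~ e a b} ->
  num_edges e + #|A| * #|B| <= 'C(#|T|, 2).
Proof.
move=> AB noAB; rewrite /num_edges -card_draws.
set E := [set S : {set T} | _].
set P := [set [set p.1; p.2] | p in setX A B].
have neqAB a b : a \in A -> b \in B -> a != b.
  move=> aA bB; apply/eqP=> ab; move: AB; rewrite disjoints_subset.
  by move=> /subsetP/(_ a aA); rewrite inE ab bB.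
have cardP : #|P| = #|A| * #|B|.
  rewrite card_in_imset ?cardsX // => -[a b] [a' b'] /setXP[aA bB] /setXP[aA' bB'].
  move=> /= /eq_set2[[-> ->] // | [ab' ba']].
  by move: (neqAB _ _ aA bB'); rewrite ab' eqxx.
have EP : E :&: P = set0.
  apply/setP=> S; rewrite !inE; apply/negbTE/negP=> /andP[].
  case/existsP=> x /existsP[y /andP[exy /eqP ->]] /imsetP[[a b]].
  rewrite inE /= => /andP[aA bB] /eq_set2[] [xa yb]; move: exy (noAB _ _ aA bB).
    by rewrite xa yb => ->.
  by rewrite xa yb e_sym => ->.
have EP2 : E :|: P \subset [set S : {set T} | #|S| == 2].
  rewrite subUset; apply/andP; split; apply/subsetP=> S; rewrite !inE.
    by case/existsP=> x /existsP[y /andP[exy /eqP ->]];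
      rewrite cards2; case: (eqVneq x y) exy => [-> | //]; rewrite e_irr.
  by case/imsetP=> -[a b]; rewrite inE /= => /andP[aA bB] ->;
    rewrite cards2 neqAB.
by have := subset_leq_card EP2; rewrite cardsU EP cards0 subn0 cardP.
Qed.

End CrossPairs.

Definition del_component (T : finType) (e : rel T) (F : {set T}) (x : T) :
    {set T} :=
  [set z | connect (del_rel e F) x z].

Section Components.

Variables (T : finType) (e : rel T) (F : {set T}).

Lemma del_rel_sym : symmetric e -> symmetric (del_rel e F).
Proof. by move=> e_sym x y; rewrite /del_rel /= e_sym [(x \notin F) && _]andbC. Qed.

Lemma del_component_subsetC x : x \notin F -> del_component e F x \subset ~: F.
Proof.
move=> xF; apply/subsetP=> z; rewrite !inE => /connectP[p].
elim: p x xF => [|a p IHp] x xF /=; first by move=> _ ->.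
by case/andP=> /and3P[_ _ aF] /IHp; apply.
Qed.

Lemma card_del_component g x :
  irreflexive e -> good_neighbor_faulty e g F -> x \notin F ->
  g.+1 <= #|del_component e F x|.
Proof.
move=> e_irr gF xF.
have nbhd_sub : x |: (nbhd e x :&: ~: F) \subset del_component e F x.
  apply/subsetP=> z; rewrite /nbhd !inE => /orP[/eqP -> | /andP[exz zF]].
    exact: connect0.
  by apply: connect1; rewrite /del_rel /= exz xF.
apply: leq_trans (subset_leq_card nbhd_sub).
by rewrite cardsU1 /nbhd !inE e_irr; exact: gF.
Qed.

Hypothesis e_sym : symmetric e.

Lemma disjoint_del_components x y :
  ~~ connect (del_rel e F) x y ->
  [disjoint del_component e F x & del_component e F y].
Proof.
move=> nxy; rewrite -setI_eq0; apply/eqP/setP=> z; rewrite !inE.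
apply/negbTE/negP=> /andP[xz yz]; move/negP: nxy; apply.
by apply: connect_trans xz _; rewrite (sym_connect_sym (del_rel_sym e_sym)).
Qed.

Lemma del_components_nonadjacent x y :
  ~~ connect (del_rel e F) x y -> x \notin F -> y \notin F ->
  {in del_component e F x & del_component e F y, forall c d, ~~ e c d}.
Proof.
move=> nxy xF yF c d cx dy; apply/negP=> ecd.
have /subsetP/(_ c cx) cF := del_component_subsetC xF.
have /subsetP/(_ d dy) dF := del_component_subsetC yF.
have dx : d \in del_component e F x.
  move: cx; rewrite !inE => xc; apply: connect_trans xc (connect1 _).
  by rewrite /del_rel /= ecd -!in_setC cF dF.
by move/disjoint_del_components: nxy; rewrite disjoints_subset =>
  /subsetP/(_ d dx); rewrite inE dy.
Qed.

End Components.

Lemma good_neighbor_le_max_degree (T : finType) (e : rel T) g F x :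
  good_neighbor_faulty e g F -> x \notin F -> g <= max_degree e.
Proof.
move=> gF xF; apply: leq_trans (gF x xF) _; rewrite /max_degree.
exact: leq_trans (subset_leq_card (subsetIl _ _)) (leq_bigmax x).
Qed.

Lemma disconnected_after_neq0 (T : finType) (e : rel T) F :
  connected_graph e -> disconnected_after e F -> F != set0.
Proof.
move=> e_conn [x [y [_ _ nxy]]]; apply/eqP=> F0; move/negP: nxy; apply.
have del0 : del_rel e F =2 e by move=> a b; rewrite /del_rel /= F0 !inE !andbT.
by rewrite (eq_connect del0) e_conn.
Qed.

Theorem proposition1p1 (T : finType) (e : rel T) (g : nat) :
  simple_graph e -> connected_graph e ->
  (exists F : {set T}, good_neighbor_cut e g F) ->
  [/\ 0 <= g, g <= minn (max_degree e) ((#|T| - 3) %/ 2)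
    & num_edges e + (g + 1) ^ 2 <= 'C(#|T|, 2)].
Proof.
move=> [e_sym e_irr] e_conn [F [gF cutF]].
have F_gt0 : 0 < #|F| by rewrite card_gt0 (disconnected_after_neq0 e_conn cutF).
case: cutF => x [y [xF yF nxy]].
set C := del_component e F x; set D := del_component e F y.
have gC : g.+1 <= #|C| := card_del_component e_irr gF xF.
have gD : g.+1 <= #|D| := card_del_component e_irr gF yF.
have CD : [disjoint C & D] := disjoint_del_components e_sym nxy.
have CD_F : #|C| + #|D| + #|F| <= #|T|.
  have CD_sub : C :|: D \subset ~: F.
    by rewrite subUset !del_component_subsetC.
  have := subset_leq_card CD_sub; have := cardsC F.
  by rewrite cardsU (disjoint_setI0 CD) cards0 subn0; lia.
split=> //.
  rewrite leq_min (good_neighbor_le_max_degree gF xF) /= leq_divRL //.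
  (* The #|T| of CD_F and of the goal are elaborated differently; [set] merges
     them into one atom for lia. *)
  by set n := #|T| in CD_F *; lia.
apply: leq_trans (num_edges_add_cross e_sym e_irr CD
  (del_components_nonadjacent e_sym nxy xF yF)).
by rewrite leq_add2l addn1; exact: leq_mul.
Qed.
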